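(* Fix a TxnSP instance. Let $i$ and $j$ be subschedules formed by the same subset $S\subseteq J$, and suppose $i$ dominates $j$, i.e. $ms_i\le mt_j$. Let $S'\supseteq S$. Then for every subschedule $l$ formed by $S'$ and derived from $j$, there exists a subschedule $k$ formed by $S'$ and derived from $i$ with $ms_k\le ms_l$.
   Context: TxnSP instance: jobs $J=\{1,\dots,n\}$, identical machines $1,\dots,m$, lengths $L_\alpha>0$, symmetric binary conflict matrix $C$ with zero diagonal ($C_{\alpha\beta}=1$ iff $\alpha\neq\beta$ conflict). Insertion process: Start from some state, where each machine $\mu$ has a processing time $P_\mu$ (initially $0$ when empty). An instruction $(\alpha,\mu)$ appends a not-yet-placed job $\alpha$ at the end of machine $\mu$. It assigns $\alpha$ the start time $st(\alpha)$, defined as the least $t\ge P_\mu$ such that $[t,t+L_\alpha)$ is disjoint from $[st(\beta),ct(\beta))$ for every already placed job $\beta$ with $C_{\alpha\beta}=1$. It then sets the completion time $ct(\alpha)=st(\alpha)+L_\alpha$ and updates $P_\mu:=ct(\alpha)$. A subschedule formed by $S\subseteq J$ is the result (machine assignment, per-machine order, start and completion times) of applying, from the empty state, a list of instructions whose jobs are exactly the elements of $S$. Its size is $|S|$. A schedule is a subschedule formed by $J$. Its makespan $ms$ is $\max_\mu P_\mu$, and its minimum time $mt$ is $\min_\mu P_\mu$. A subschedule $j$ is derived from $i$ (and $i$ is a root of $j$) if there is an instruction list producing $i$ and a further list $\mathcal D$ (the derivation plan) such that applying $\mathcal D$ after it produces $j$. The residual subschedule $j-i$ is the result of applying $\mathcal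 D$ from the empty state. *)

From Stdlib Require Import Reals List Arith.
Import ListNotations.
Open Scope R_scope.

(* Jobs are the naturals 0..n-1, machines the naturals 0..m-1.
   A state records, for every job, either None (not yet placed) or
   Some (machine, start time); and for every machine its processing time P. *)
Definition State : Type := ((nat -> option (nat * R)) * (nat -> R))%type.

Definition empty_state : State := (fun _ => None, fun _ => 0).

Definition Pt (s : State) (mu : nat) : R := snd s mu.

Definition feasible (L : nat -> R) (C : nat -> nat -> bool)
  (s : State) (a mu : nat) (t : R) : Prop :=
  Pt s mu <= t /\
  forall b mb tb, fst s b = Some (mb, tb) -> C a b = true ->
    (t + L a <= tb \/ tb + L b <= t).

Definition step (n m : nat) (L : nat -> R) (C : nat -> nat -> bool)
  (s : State) (ins : nat * nat) (s' : State) : Prop :=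
  let (a, mu) := ins in
  (a < n)%nat /\ (mu < m)%nat /\ fst s a = None /\
  exists t, feasible L C s a mu t /\
    (forall t', feasible L C s a mu t' -> t <= t') /\
    s' = (fun b => if Nat.eqb b a then Some (mu, t) else fst s b,
          fun nu => if Nat.eqb nu mu then t + L a else snd s nu).

Inductive run (n m : nat) (L : nat -> R) (C : nat -> nat -> bool)
  : State -> list (nat * nat) -> State -> Prop :=
| run_nil s : run n m L C s [] s
| run_cons s ins l s1 s2 :
    step n m L C s ins s1 -> run n m L C s1 l s2 -> run n m L C s (ins :: l) s2.

Definition formed_by (n m : nat) (L : nat -> R) (C : nat -> nat -> bool)
  (S : nat -> Prop) (s : State) : Prop :=
  exists l, run n m L C empty_state l s /\
    (forall a, In a (map fst l) <-> S a).

Definition derived (n m : nat) (L : nat -> R) (C : nat -> nat -> bool)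
  (i j : State) : Prop :=
  exists l D, run n m L C empty_state l i /\ run n m L C i D j.

(* makespan = max_mu P_mu, minimum time = min_mu P_mu (for m >= 1). *)
Definition ms (m : nat) (s : State) : R :=
  fold_right (fun mu acc => Rmax (Pt s mu) acc) (Pt s 0%nat) (seq 0 m).
Definition mt (m : nat) (s : State) : R :=
  fold_right (fun mu acc => Rmin (Pt s mu) acc) (Pt s 0%nat) (seq 0 m).

From Stdlib Require Import Reals List Arith Lra Lia Classical.
Import ListNotations.
Open Scope R_scope.

(* Starting from i, insert the
   jobs of S' \ S on the machines l uses, in increasing order of their start
   times in l.  Every such job starts in l after P_mu(j) >= mt j >= ms i, hence
   after everything placed in i; by induction each inserted job can start no
   later than in l, since the start time of the greedy insertion is the least
   admissible one.  So every machine of the result k finishes no later than in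
   l, and ms k <= ms l. *)

Lemma exists_min_in_list {A} (f : A -> R) (P : A -> Prop) (xs : list A) :
  (exists x, In x xs /\ P x) ->
  exists x, In x xs /\ P x /\ forall y, In y xs -> P y -> f x <= f y.
Proof.
  induction xs as [|a xs IH]; intros [x [Hx Px]]; [destruct Hx|].
  destruct (classic (exists x, In x xs /\ P x)) as [Hex|Hno].
  - destruct (IH Hex) as [z [Hz [Pz Hmin]]].
    destruct (classic (P a /\ f a <= f z)) as [[Pa Ha]|Hn].
    + exists a. split; [now left|]. split; [exact Pa|].
      intros y [<-|Hy] Py; [lra|]. specialize (Hmin y Hy Py). lra.
    + exists z. split; [now right|]. split; [exact Pz|].
      intros y [<-|Hy] Py; [|exact (Hmin y Hy Py)].
      destruct (Rle_dec (f a) (f z)); [exfalso; auto|lra].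
  - destruct Hx as [<-|Hx]; [|exfalso; eauto].
    exists a. split; [now left|]. split; [exact Px|].
    intros y [<-|Hy] Py; [lra|]. exfalso; eauto.
Qed.

Lemma filter_length_mono {A} (p p' : A -> bool) (xs : list A) :
  (forall x, p' x = true -> p x = true) ->
  (length (filter p' xs) <= length (filter p xs))%nat.
Proof.
  intros H; induction xs as [|a xs IH]; simpl; auto.
  destruct (p' a) eqn:E; [rewrite (H _ E); simpl; lia|].
  destruct (p a); simpl; lia.
Qed.

Lemma filter_length_lt {A} (p p' : A -> bool) (xs : list A) x :
  (forall y, p' y = true -> p y = true) ->
  In x xs -> p x = true -> p' x = false ->
  (length (filter p' xs) < length (filter p xs))%nat.
Proof.
  intros H; induction xs as [|a xs IH]; simpl; intros Hx hp hp'; [tauto|].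
  destruct Hx as [->|Hx].
  - rewrite hp, hp'. simpl. pose proof (filter_length_mono p p' xs H). lia.
  - specialize (IH Hx hp hp').
    destruct (p' a) eqn:E; [rewrite (H _ E); simpl; lia|].
    destruct (p a); simpl; lia.
Qed.

Lemma Pt_le_ms m s mu : (mu < m)%nat -> Pt s mu <= ms m s.
Proof.
  intros Hmu. unfold ms. assert (Hin : In mu (seq 0 m)) by (apply in_seq; lia).
  induction (seq 0 m) as [|nu nus IH]; simpl in *; [tauto|].
  destruct Hin as [->|Hin]; [apply Rmax_l|].
  eapply Rle_trans; [apply IH, Hin|apply Rmax_r].
Qed.

Lemma mt_le_Pt m s mu : (mu < m)%nat -> mt m s <= Pt s mu.
Proof.
  intros Hmu. unfold mt. assert (Hin : In mu (seq 0 m)) by (apply in_seq; lia).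
  induction (seq 0 m) as [|nu nus IH]; simpl in *; [tauto|].
  destruct Hin as [->|Hin]; [apply Rmin_l|].
  eapply Rle_trans; [apply Rmin_r|apply IH, Hin].
Qed.

Lemma ms_le_ms m s s' : (0 < m)%nat ->
  (forall mu, (mu < m)%nat -> Pt s mu <= Pt s' mu) -> ms m s <= ms m s'.
Proof.
  intros hm H. unfold ms at 1.
  assert (Hbound : forall mu, In mu (seq 0 m) -> Pt s mu <= ms m s').
  { intros mu Hin. apply in_seq in Hin.
    eapply Rle_trans; [apply H; lia|apply Pt_le_ms; lia]. }
  assert (H0 : Pt s 0 <= ms m s') by (apply Hbound, in_seq; lia).
  induction (seq 0 m) as [|nu nus IH]; simpl; [exact H0|].
  apply Rmax_lub; [apply Hbound; now left|apply IH; intros; apply Hbound; now right].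
Qed.

Definition placed (s : State) (x : nat) : Prop := fst s x <> None.

Definition start (s : State) (x : nat) : R :=
  match fst s x with Some (_, t) => t | None => 0 end.

Section Insertion.

Variables (n m : nat) (L : nat -> R) (C : nat -> nat -> bool).
Hypothesis hL : forall a, (a < n)%nat -> 0 < L a.
Hypothesis hCsym : forall a b, C a b = C b a.

Record wf_state (s : State) : Prop := {
  wf_range : forall b mb tb, fst s b = Some (mb, tb) -> (b < n)%nat /\ (mb < m)%nat;
  wf_before_Pt : forall b mb tb, fst s b = Some (mb, tb) -> tb + L b <= Pt s mb;
  wf_disjoint : forall b mb tb c mc tc, fst s b = Some (mb, tb) ->
    fst s c = Some (mc, tc) -> b <> c -> (mb = mc \/ C b c = true) ->
    tb + L b <= tc \/ tc + L c <= tb }.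

Lemma wf_empty : wf_state empty_state.
Proof. split; simpl; intros; discriminate. Qed.

Lemma step_wf s ins s' : wf_state s -> step n m L C s ins s' -> wf_state s'.
Proof.
  destruct ins as [a mu];
    intros [R0 R1 R2] [Ha [Hmu [Hnone [t [[HP Hf] [Hmin ->]]]]]].
  pose proof (hL a Ha) as La. unfold Pt in *.
  split; simpl.
  - intros b mb tb. destruct (Nat.eqb_spec b a) as [->|hne]; [|apply R0].
    intros H; inversion H; subst; auto.
  - intros b mb tb. destruct (Nat.eqb_spec b a) as [->|hne].
    + intros H; inversion H; subst. rewrite Nat.eqb_refl. lra.
    + intros H. pose proof (R1 _ _ _ H).
      destruct (Nat.eqb_spec mb mu) as [->|hm]; lra.
  - intros b mb tb c mc tc Hb Hc hbc Hor.
    destruct (Nat.eqb_spec b a) as [->|hba], (Nat.eqb_spec c a) as [->|hca].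
    + congruence.
    + inversion Hb; subst. destruct Hor as [<-|HC].
      * right. pose proof (R1 _ _ _ Hc). lra.
      * exact (Hf _ _ _ Hc HC).
    + inversion Hc; subst. destruct Hor as [->|HC].
      * left. pose proof (R1 _ _ _ Hb). lra.
      * rewrite hCsym in HC. destruct (Hf _ _ _ Hb HC); [right|left]; lra.
    + exact (R2 _ _ _ _ _ _ Hb Hc hbc Hor).
Qed.

Lemma run_wf s D s' : run n m L C s D s' -> wf_state s -> wf_state s'.
Proof. induction 1; eauto using step_wf. Qed.

Lemma step_keeps s ins s' b v :
  step n m L C s ins s' -> fst s b = Some v -> fst s' b = Some v.
Proof.
  destruct ins as [a mu]; intros [_ [_ [Hnone [t [_ [_ ->]]]]]] Hb.
  simpl. destruct (Nat.eqb_spec b a); [subst; congruence|exact Hb].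
Qed.

Lemma run_keeps s D s' b v :
  run n m L C s D s' -> fst s b = Some v -> fst s' b = Some v.
Proof. induction 1; eauto using step_keeps. Qed.

Lemma step_Pt_mono s ins s' mu : step n m L C s ins s' -> Pt s mu <= Pt s' mu.
Proof.
  destruct ins as [a mu']; intros [Ha [_ [_ [t [[HP _] [_ ->]]]]]].
  pose proof (hL a Ha). unfold Pt in *; simpl.
  destruct (Nat.eqb_spec mu mu'); [subst|]; lra.
Qed.

Lemma run_Pt_mono s D s' mu : run n m L C s D s' -> Pt s mu <= Pt s' mu.
Proof.
  induction 1; [lra|]. pose proof (step_Pt_mono _ _ _ mu H). lra.
Qed.

Lemma run_start_ge_Pt s D s' b mb tb :
  run n m L C s D s' -> fst s' b = Some (mb, tb) -> fst s b = None -> Pt s mb <= tb.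
Proof.
  induction 1 as [|s [a mu] D s1 s2 Hstep Hrun IH]; intros Hb Hn; [congruence|].
  destruct (fst s1 b) as [v|] eqn:E.
  - pose proof (run_keeps _ _ _ _ _ Hrun E) as Hv. rewrite Hb in Hv. inversion Hv; subst v.
    destruct Hstep as [_ [_ [_ [t [[HP _] [_ ->]]]]]]. simpl in E.
    destruct (Nat.eqb_spec b a); [inversion E; subst; exact HP|congruence].
  - pose proof (IH Hb eq_refl). pose proof (step_Pt_mono _ _ _ mb Hstep). lra.
Qed.

Lemma run_placed s D s' b :
  run n m L C s D s' -> (placed s' b <-> placed s b \/ In b (map fst D)).
Proof.
  unfold placed. induction 1 as [|s [a mu] D s1 s2 Hstep Hrun IH]; simpl; [tauto|].
  rewrite IH. destruct Hstep as [_ [_ [_ [t [_ [_ ->]]]]]]. simpl.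
  destruct (Nat.eqb_spec b a); intuition congruence.
Qed.

Lemma run_app s D1 s1 D2 s2 :
  run n m L C s D1 s1 -> run n m L C s1 D2 s2 -> run n m L C s (D1 ++ D2) s2.
Proof. induction 1; intros; simpl; eauto using run. Qed.

Lemma formed_by_placed S s lst :
  run n m L C empty_state lst s -> (forall a, In a (map fst lst) <-> S a) ->
  forall b, placed s b <-> S b.
Proof.
  intros Hr HS b. rewrite (run_placed _ _ _ b Hr), <- HS. unfold placed. simpl. tauto.
Qed.

(* The least admissible start time is P_mu or the completion time of a placed
   job: the largest such value below an admissible time is again admissible. *)
Definition start_candidates (s : State) (mu : nat) : list R :=
  Pt s mu :: map (fun b => start s b + L b) (seq 0 n).

Lemma feasible_candidate_below s a mu t : wf_state s -> feasible L C s a mu t ->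
  exists c, In c (start_candidates s mu) /\ feasible L C s a mu c /\ c <= t.
Proof.
  intros Hw [HP Hf].
  destruct (exists_min_in_list Ropp (fun c => c <= t) (start_candidates s mu))
    as [c [Hc [Hct Hmax]]].
  { exists (Pt s mu). split; [now left|exact HP]. }
  exists c. split; [exact Hc|]. split; [split|exact Hct].
  - assert (- c <= - Pt s mu) by (apply Hmax; [now left|exact HP]). lra.
  - intros b mb tb Hb HC. destruct (Hf b mb tb Hb HC) as [h|h]; [left; lra|right].
    assert (- c <= - (tb + L b)); [|lra].
    apply Hmax; [|exact h]. right. apply in_map_iff. exists b.
    unfold start; rewrite Hb. split; [reflexivity|].
    apply in_seq. destruct (wf_range _ Hw _ _ _ Hb). lia.
Qed.

Lemma feasible_least s a mu t : wf_state s -> feasible L C s a mu t ->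
  exists t0, feasible L C s a mu t0 /\ forall t', feasible L C s a mu t' -> t0 <= t'.
Proof.
  intros Hw Ht. destruct (feasible_candidate_below _ _ _ _ Hw Ht) as [c1 [Hc1 [Hf1 _]]].
  destruct (exists_min_in_list (fun c => c) (feasible L C s a mu) (start_candidates s mu))
    as [c0 [_ [Hf0 Hmin]]]; [eauto|].
  exists c0. split; [exact Hf0|]. intros t' Ht'.
  destruct (feasible_candidate_below _ _ _ _ Hw Ht') as [c [Hc [Hfc Hle]]].
  specialize (Hmin c Hc Hfc). lra.
Qed.

Section Behind.

Variable l : State.
Hypothesis Hwl : wf_state l.

(* [s] can be completed greedily to a schedule finishing no later than [l]. *)
Record behind (s : State) : Prop := {
  behind_placed : forall b, placed s b -> placed l b;
  behind_machine : forall x mu t, fst l x = Some (mu, t) -> fst s x = None ->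
    Pt s mu <= t;
  behind_conflict : forall x mu t y my ty, fst l x = Some (mu, t) ->
    fst s x = None -> fst s y = Some (my, ty) -> C x y = true -> ty + L y <= t;
  behind_Pt : forall mu, (mu < m)%nat -> Pt s mu <= Pt l mu }.

Definition pendingb (s : State) (x : nat) : bool :=
  match fst l x, fst s x with Some _, None => true | _, _ => false end.

Definition pending_count (s : State) : nat :=
  length (filter (pendingb s) (seq 0 n)).

Lemma step_pending_count s x mu s' :
  step n m L C s (x, mu) s' -> pendingb s x = true ->
  (pending_count s' < pending_count s)%nat.
Proof.
  intros Hstep Hx. assert (Hxn : (x < n)%nat) by apply Hstep.
  destruct Hstep as [_ [_ [_ [t [_ [_ ->]]]]]].
  apply filter_length_lt with x; [|apply in_seq; lia|exact Hx|].
  - intros y. unfold pendingb; simpl.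
    destruct (Nat.eqb_spec y x); [destruct (fst l y); discriminate|auto].
  - unfold pendingb; simpl. rewrite Nat.eqb_refl. destruct (fst l x); reflexivity.
Qed.

(* Inserting the pending job of least start time in [l] on its machine in [l]:
   it is admissible at its start time in [l], so it starts no later. *)
Lemma behind_step s x mu t : wf_state s -> behind s ->
  fst l x = Some (mu, t) -> fst s x = None ->
  (forall x2 mu2 t2, fst l x2 = Some (mu2, t2) -> fst s x2 = None -> t <= t2) ->
  exists s', step n m L C s (x, mu) s' /\ behind s'.
Proof.
  intros Hws [Ba Bm Bc Bp] Elx Esx Hfirst.
  destruct (wf_range _ Hwl _ _ _ Elx) as [xn mum]. pose proof (hL x xn) as Lx.
  assert (Hfeas : feasible L C s x mu t).
  { split; [exact (Bm _ _ _ Elx Esx)|]. intros b mb tb Hb HC. right.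
    exact (Bc _ _ _ _ _ _ Elx Esx Hb HC). }
  destruct (feasible_least _ _ _ _ Hws Hfeas) as [t' [Hf' Hmin']].
  pose proof (Hmin' t Hfeas) as Htt.
  assert (Hlater : forall x2 mu2 t2, fst l x2 = Some (mu2, t2) -> fst s x2 = None ->
            x2 <> x -> (mu2 = mu \/ C x2 x = true) -> t' + L x <= t2).
  { intros x2 mu2 t2 H1 H2 hne Hor. pose proof (Hfirst _ _ _ H1 H2).
    pose proof (hL x2 ltac:(destruct (wf_range _ Hwl _ _ _ H1); lia)).
    destruct (wf_disjoint _ Hwl _ _ _ _ _ _ H1 Elx hne Hor); lra. }
  eexists. split; [repeat split; eauto|].
  split; unfold placed, Pt in *; simpl.
  - intros b. destruct (Nat.eqb_spec b x) as [->|]; [rewrite Elx; discriminate|apply Ba].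
  - intros x2 mu2 t2 Hl2 Hs2.
    destruct (Nat.eqb_spec x2 x) as [->|hne]; [discriminate|].
    destruct (Nat.eqb_spec mu2 mu) as [->|]; [apply (Hlater x2 mu t2); auto|exact (Bm _ _ _ Hl2 Hs2)].
  - intros x2 mu2 t2 y my ty Hl2 Hs2 Hy HC.
    destruct (Nat.eqb_spec x2 x) as [->|hne]; [discriminate|].
    destruct (Nat.eqb_spec y x) as [->|]; [|exact (Bc _ _ _ _ _ _ Hl2 Hs2 Hy HC)].
    inversion Hy; subst. apply (Hlater x2 mu2 t2); auto.
  - intros mu0 hmu0. destruct (Nat.eqb_spec mu0 mu) as [->|]; [|exact (Bp _ hmu0)].
    pose proof (wf_before_Pt _ Hwl _ _ _ Elx). unfold Pt in *. lra.
Qed.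

Lemma behind_complete s : wf_state s -> behind s ->
  exists D k, run n m L C s D k /\ (forall b, placed k b <-> placed l b) /\
    (forall mu, (mu < m)%nat -> Pt k mu <= Pt l mu).
Proof.
  remember (pending_count s) as N eqn:HN. revert s HN.
  induction N as [N IH] using lt_wf_ind; intros s HN Hws Hb.
  destruct (filter (pendingb s) (seq 0 n)) as [|x0 xs] eqn:Epend.
  - exists [], s. split; [constructor|]. split; [|apply Hb].
    intros b. split; [apply Hb|]. intros Hlb.
    destruct (fst l b) as [[mb tb]|] eqn:Elb; [|congruence].
    intros Hsb. assert (Hin : In b (filter (pendingb s) (seq 0 n))).
    { apply filter_In. split.
      - apply in_seq. destruct (wf_range _ Hwl _ _ _ Elb). lia.
      - unfold pendingb. rewrite Elb. now destruct (fst s b). }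
    rewrite Epend in Hin. destruct Hin.
  - destruct (exists_min_in_list (start l) (fun x => pendingb s x = true) (seq 0 n))
      as [x [_ [Hq Hmin]]].
    { exists x0. apply filter_In. rewrite Epend. now left. }
    unfold pendingb in Hq.
    destruct (fst l x) as [[mu t]|] eqn:Elx; [|discriminate].
    destruct (fst s x) eqn:Esx; [discriminate|].
    destruct (behind_step s x mu t Hws Hb Elx Esx) as [s' [Hstep Hb']].
    { intros x2 mu2 t2 H1 H2.
      assert (h : start l x <= start l x2).
      { apply Hmin; [apply in_seq; destruct (wf_range _ Hwl _ _ _ H1); lia|].
        unfold pendingb. now rewrite H1, H2. }
      unfold start in h. now rewrite Elx, H1 in h. }
    assert (Hlt : (pending_count s' < N)%nat).
    { subst N. apply step_pending_count with x mu; [exact Hstep|].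
      unfold pendingb. now rewrite Elx, Esx. }
    destruct (IH _ Hlt s' eq_refl (step_wf _ _ _ Hws Hstep) Hb') as [D [k [Hr Hk]]].
    exists ((x, mu) :: D), k. split; [econstructor; eauto|exact Hk].
Qed.

End Behind.

(* Everything placed in [i] completes by [ms i <= mt j], and every job that
   [l] adds to [j] starts after [P_mu(j) >= mt j]. *)
Lemma behind_of_dominance i j D l :
  wf_state i -> run n m L C j D l ->
  (forall x, fst i x = None -> fst j x = None) ->
  (forall b, placed i b -> placed l b) ->
  wf_state l -> ms m i <= mt m j -> behind l i.
Proof.
  intros Hwi HjD Hij Hil Hwl hdom.
  assert (Hlate : forall x mu t, fst l x = Some (mu, t) -> fst i x = None ->
            (mu < m)%nat /\ ms m i <= t).
  { intros x mu t H1 H2. destruct (wf_range _ Hwl _ _ _ H1) as [_ Hmu].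
    pose proof (run_start_ge_Pt _ _ _ _ _ _ HjD H1 (Hij _ H2)).
    pose proof (mt_le_Pt m j mu Hmu). split; [exact Hmu|lra]. }
  split; [exact Hil| | |].
  - intros x mu t H1 H2. destruct (Hlate _ _ _ H1 H2) as [Hmu Ht].
    pose proof (Pt_le_ms m i mu Hmu). lra.
  - intros x mu t y my ty H1 H2 H3 _. destruct (Hlate _ _ _ H1 H2) as [_ Ht].
    destruct (wf_range _ Hwi _ _ _ H3) as [_ Hmy].
    pose proof (wf_before_Pt _ Hwi _ _ _ H3). pose proof (Pt_le_ms m i my Hmy). lra.
  - intros mu hmu. pose proof (run_Pt_mono _ _ _ mu HjD).
    pose proof (Pt_le_ms m i mu hmu). pose proof (mt_le_Pt m j mu hmu). lra.
Qed.

End Insertion.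

Theorem theorem4 (n m : nat) (L : nat -> R) (C : nat -> nat -> bool)
  (hm : (0 < m)%nat)
  (hL : forall a, (a < n)%nat -> 0 < L a)
  (hCsym : forall a b, C a b = C b a)
  (hCdiag : forall a, C a a = false)
  (S S' : nat -> Prop)
  (hSJ : forall a, S a -> (a < n)%nat)
  (hS'J : forall a, S' a -> (a < n)%nat)
  (hSS' : forall a, S a -> S' a)
  (i j : State)
  (hi : formed_by n m L C S i)
  (hj : formed_by n m L C S j)
  (hdom : ms m i <= mt m j) :
  forall l : State,
    formed_by n m L C S' l -> derived n m L C j l ->
    exists k : State,
      formed_by n m L C S' k /\ derived n m L C i k /\ ms m k <= ms m l.
Proof.
  intros l [ll [Hrl HSl]] [lj0 [D [_ HjD]]].
  destruct hi as [li [Hri HSi]], hj as [lj [Hrj HSj]].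
  pose proof (formed_by_placed _ _ _ _ _ _ _ Hri HSi) as Pi.
  pose proof (formed_by_placed _ _ _ _ _ _ _ Hrj HSj) as Pj.
  pose proof (formed_by_placed _ _ _ _ _ _ _ Hrl HSl) as Pl.
  pose proof (run_wf _ _ _ _ hL hCsym _ _ _ Hri (wf_empty _ _ _ _)) as Hwi.
  pose proof (run_wf _ _ _ _ hL hCsym _ _ _ Hrl (wf_empty _ _ _ _)) as Hwl.
  assert (Hbehind : behind m L C l i).
  { apply (behind_of_dominance n m L C hL i j D l); auto.
    - intros x Hx. destruct (fst j x) eqn:E; [|reflexivity]. exfalso.
      assert (Hjx : placed j x) by (unfold placed; congruence).
      now apply Pj, Pi in Hjx.
    - intros b Hb. apply Pl, hSS', Pi, Hb. }
  destruct (behind_complete _ _ _ _ hL hCsym _ Hwl _ Hwi Hbehind)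
    as [D' [k [Hrk [Hpk Hk]]]].
  exists k. split; [|split].
  - exists (li ++ D'). split; [eapply run_app; eauto|].
    intros a. pose proof (run_app _ _ _ _ _ _ _ _ _ Hri Hrk) as Hr.
    rewrite <- Pl, <- Hpk, (run_placed _ _ _ _ _ _ _ a Hr). unfold placed. simpl. tauto.
  - exists li, D'. auto.
  - apply ms_le_ms; auto.
Qed.
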